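(* Let $V$ be a compact subset of $\mathcal{A}_0$ such that $V^T$ is complete. Then $$V^{**}=(V^T)^{\perp}.$$
   Context: $D=\{z:|z|<1\}$, $\overline D$ its closure. $\mathcal{A}$ is the space of functions $f(z)=\sum_{k\ge0}a_k(f)z^k$ analytic in $D$, with the topology of locally uniform convergence; $\mathcal{A}_0=\{f\in\mathcal{A}: a_0(f)=1\}$. $\mathcal{A}(\overline D)$ is the set of functions analytic in some disk $\{|z|<R\}$ with $R>1$, and $\mathcal{A}_0(\overline D)=\{g\in\mathcal{A}(\overline D):a_0(g)=1\}$. The Hadamard product is $(f*g)(z)=\sum_{k\ge0}a_k(f)a_k(g)z^k$. For $V\subset\mathcal{A}_0$, $V^*=\{g\in\mathcal{A}_0:(f*g)(z)\ne0 \ \forall z\in D,\ \forall f\in V\}$, $V^{**}=(V^* )^*$, and $V^T=\{g\in\mathcal{A}_0(\overline D): (f*g)(1)\ne0 \ \forall f\in V\}$. For $U\subset\mathcal{A}_0(\overline D)$, $U^{\perp}=\{h\in\mathcal{A}_0:(g*h)(1)\ne0\ \forall g\in U\}$. For $x\in\overline D$, $(P_xf)(z)=f(xz)$; a set $W$ is complete if $P_xf\in W$ for all $f\in W$, $x\in\overline D$. *)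

(* complex numbers R[i] over R : realType (= C),
   power series represented by their coefficient sequences nat -> C. *)
From mathcomp Require Import all_boot all_order all_algebra.
From mathcomp Require Import boolp classical_sets reals.
From mathcomp Require Import complex.
Import Order.TTheory GRing.Theory Num.Theory.
Set Implicit Arguments. Unset Strict Implicit. Unset Printing Implicit Defensive.
Local Open Scope ring_scope.
Local Open Scope classical_set_scope.

Section Defs.
Variable R : realType.
Local Notation C := R[i].

Definition has_sum (u : nat -> C) (l : C) : Prop :=
  forall e : C, 0 < e -> exists N : nat, forall n : nat, (N <= n)%N ->
    `| \sum_(k < n) u k - l | < e.

Definition converges (u : nat -> C) : Prop := exists l, has_sum u l.

Definition pser (a : nat -> C) (z : C) : nat -> C := fun k => a k * z ^+ k.

Definition inA (a : nat -> C) : Prop :=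
  forall z : C, `|z| < 1 -> converges (pser a z).

Definition inA0 (a : nat -> C) : Prop := inA a /\ a 0%N = 1.

Definition inAbar (a : nat -> C) : Prop :=
  exists rho : C, 1 < rho /\ forall z : C, `|z| < rho -> converges (pser a z).

Definition inAbar0 (a : nat -> C) : Prop := inAbar a /\ a 0%N = 1.

Definition hadamard (a b : nat -> C) : nat -> C := fun k => a k * b k.

Definition dual (V : set (nat -> C)) : set (nat -> C) :=
  [set g | inA0 g /\ forall f, V f -> forall z : C, `|z| < 1 ->
             forall l, has_sum (pser (hadamard f g) z) l -> l <> 0].

Definition dualT (V : set (nat -> C)) : set (nat -> C) :=
  [set g | inAbar0 g /\ forall f, V f ->
             forall l, has_sum (pser (hadamard f g) 1) l -> l <> 0].

Definition perp (U : set (nat -> C)) : set (nat -> C) :=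
  [set h | inA0 h /\ forall g, U g ->
             forall l, has_sum (pser (hadamard g h) 1) l -> l <> 0].

(* (P_x f)(z) = f(xz) : coefficients a_k x^k *)
Definition Pop (x : C) (a : nat -> C) : nat -> C := fun k => a k * x ^+ k.

Definition complete (W : set (nat -> C)) : Prop :=
  forall f, W f -> forall x : C, `|x| <= 1 -> W (Pop x f).

(* Open sets of A for the topology of locally uniform convergence in D
   (given as traces U ∩ A): every f in U ∩ A has a basic neighbourhood
   { g in A | |g(z) - f(z)| < eps for all |z| <= r } (0 <= r < 1, eps > 0)
   contained in U. *)
Definition openA (U : set (nat -> C)) : Prop :=
  forall f, inA f -> U f ->
    exists r eps : C, [/\ 0 <= r, r < 1, 0 < eps &
      forall g, inA g ->
        (forall z : C, `|z| <= r -> forall lf lg : C,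
           has_sum (pser f z) lf -> has_sum (pser g z) lg -> `|lg - lf| < eps) ->
        U g].

Definition compactA (V : set (nat -> C)) : Prop :=
  V `<=` inA /\
  forall (I : Type) (O : I -> set (nat -> C)),
    (forall i, openA (O i)) ->
    (forall f, V f -> exists i, O i f) ->
    exists (n : nat) (t : 'I_n -> I), forall f, V f -> exists j, O (t j) f.

End Defs.

(* If g is in V^* and |z| < 1 then P_z g is in V^T, because
   (P_z g * h)(1) = (g * h)(z); this gives (V^T)^perp <= V^**.  Conversely,
   completeness of V^T gives V^T <= V^*, and every g in V^T can be dilated:
   P_t g is still in V^T for some t > 1.  Then for h in V^** we get
   (g * h)(1) = (P_t g * h)(1/t) <> 0.

   To dilate g, fix t0 > 1 inside the disc of convergence of g and cover V by
   the open sets O_n of those f having a neighbourhood on which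
   (f' * P_t g)(1) <> 0 for all 1 < t <= 1 + (t0 - 1)/(n + 1).  Every
   f in V lies in some O_n: otherwise there are f' arbitrarily close to f
   (hence, by the Cauchy estimates, with close coefficients) and t arbitrarily
   close to 1 with (f' * P_t g)(1) = 0, and in the limit (f * g)(1) = 0.
   Compactness yields a finite subcover, hence a single n.  The Cauchy
   estimate |a_k| r^k <= sup_{|z| <= r} |f(z)| is obtained without integrals,
   by averaging f over r times the N-th roots of unity. *)

From mathcomp Require Import all_boot all_order all_algebra.
From mathcomp Require Import cyclic separable cyclotomic.
From mathcomp Require Import boolp classical_sets reals.
From mathcomp Require Import complex.
From mathcomp Require Import ring zify.
Import Order.TTheory GRing.Theory Num.Theory.
Local Open Scope ring_scope.
Local Open Scope classical_set_scope.
Set Implicit Arguments. Unset Strict Implicit. Unset Printing Implicit Defensive.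

Lemma prim_root_exists (F : closedFieldType) n :
  (0 < n)%N -> n%:R != 0 :> F -> exists z : F, n.-primitive_root z.
Proof.
move=> n_gt0 n_neq0.
have [rs Xn1] := closed_field_poly_normal ('X^n - 1 : {poly F}).
rewrite lead_coefXnsubC // scale1r in Xn1.
have rs_unity : all n.-unity_root rs.
  by apply/allP => z; rewrite -root_prod_XsubC -Xn1.
have rs_uniq : uniq rs by rewrite -separable_prod_XsubC -Xn1 separable_Xn_sub_1.
have rs_size : (n < (size rs).+1)%N.
  by rewrite -(size_prod_XsubC rs id) -Xn1 size_XnsubC.
by have /hasP[z _] := has_prim_root n_gt0 rs_unity rs_uniq rs_size; exists z.
Qed.

Lemma sum_prim_root_expr (F : idomainType) N (w : F) m : N.-primitive_root w ->
  \sum_(j < N) (w ^+ m) ^+ j = if (N %| m)%N then N%:R else 0.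
Proof.
move=> pw; case: ifPn => [|N_ndvd_m].
  rewrite (prim_order_dvd pw) => /eqP ->.
  by rewrite (eq_bigr (fun _ => 1)) ?sumr_const ?card_ord // => j _; rewrite expr1n.
have : (w ^+ m - 1) * \sum_(j < N) (w ^+ m) ^+ j = 0.
  by rewrite -subrX1 -exprM mulnC exprM (prim_expr_order pw) expr1n subrr.
move/eqP; rewrite mulf_eq0 subr_eq0 -(prim_order_dvd pw) (negbTE N_ndvd_m).
by move/eqP.
Qed.

Lemma norm_prim_root (F : numDomainType) N (w : F) :
  (0 < N)%N -> N.-primitive_root w -> `|w| = 1.
Proof.
move=> N_gt0 pw; apply/eqP; rewrite -(pexpr_eq1 N_gt0) ?normr_ge0 //.
by rewrite -normrX (prim_expr_order pw) normr1.
Qed.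

Lemma norm_root_average_le (F : numFieldType) N (w : F) m (v : nat -> F) M :
  N.-primitive_root w -> (forall j, (j < N)%N -> `|v j| <= M) ->
  `|N%:R^-1 * \sum_(j < N) (w ^+ m) ^+ j * v j| <= M.
Proof.
move=> pw vM; have N_gt0 := prim_order_gt0 pw; have w1 := norm_prim_root N_gt0 pw.
rewrite normrM normfV normr_nat ler_pdivrMl ?ltr0n //.
apply: le_trans (ler_norm_sum _ _ _) _.
rewrite mulr_natl -[in leRHS](card_ord N) -sumr_const; apply: ler_sum => j _.
by rewrite normrM !normrX w1 !expr1n mul1r vM.
Qed.

Lemma dvdn_addn_subn N l k : (l < N)%N -> (k < N)%N ->
  (N %| l + (N - k))%N = (l == k).
Proof.
move=> lN kN; apply/idP/eqP => [/dvdnP[[|[|m]] Em]|->]; try lia.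
by rewrite subnKC ?dvdnn // ltnW.
Qed.

Section NumField.
Variable F : numFieldType.
Implicit Types (q t : F).

Lemma sum_geo_le q n : 0 <= q -> q < 1 -> \sum_(k < n) q ^+ k <= (1 - q)^-1.
Proof.
move=> q0 q1; have q1_neq0 : 1 - q != 0 by rewrite subr_eq0 eq_sym lt_eqF.
have -> : \sum_(k < n) q ^+ k = (1 - q ^+ n) / (1 - q).
  apply: (mulIf q1_neq0); rewrite divfK // -[1 - q ^+ n]opprB subrX1.
  by rewrite -[1 - q]opprB mulrN mulrC.
by rewrite ler_piMl ?invr_ge0 ?subr_ge0 ?(ltW q1) // gerBl exprn_ge0.
Qed.

Lemma norm_sum_geo_le (u : nat -> F) A q n : 0 <= q -> q < 1 ->
  (forall k, `|u k| <= A * q ^+ k) -> `|\sum_(k < n) u k| <= A / (1 - q).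
Proof.
move=> q0 q1 uA; have A0 : 0 <= A.
  by move: (uA 0%N); rewrite expr0 mulr1; apply: le_trans.
apply: le_trans (ler_norm_sum _ _ _) _.
apply: le_trans (_ : _ <= \sum_(k < n) A * q ^+ k) _; first by apply: ler_sum => k _.
by rewrite -mulr_sumr ler_wpM2l // sum_geo_le.
Qed.

Lemma norm_sum_geo_tail_le (u : nat -> F) A q N n : 0 <= q -> q < 1 ->
  (forall k, `|u k| <= A * q ^+ k) -> (forall k, (k < N)%N -> u k = 0) ->
  `|\sum_(k < n) u k| <= A * q ^+ N / (1 - q).
Proof.
move=> q0 q1 uA u0.
have [nN|Nn] := leqP n N.
  rewrite big1 ?normr0; last by move=> k _; apply: u0; exact: leq_trans nN.
  have A0 : 0 <= A by move: (uA 0%N); rewrite expr0 mulr1; apply: le_trans.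
  by rewrite divr_ge0 ?mulr_ge0 ?exprn_ge0 ?subr_ge0 // ltW.
rewrite -(big_mkord xpredT) (@big_cat_nat _ _ _ N 0 n _ _ (leq0n N) (ltnW Nn)) /=.
rewrite big_nat big1 ?add0r => [|k /andP[_ /u0] //].
rewrite -{1}(add0n N) big_addn big_mkord.
apply: (norm_sum_geo_le (u := fun k => u (k + N)%N)) => // k.
by rewrite -mulrA -exprD addnC; apply: uA.
Qed.

Lemma exprn_sub1_le t t0 k : 1 <= t -> t <= t0 -> 1 < t0 ->
  t ^+ k - 1 <= (t - 1) / (t0 - 1) * t0 ^+ k.
Proof.
move=> t1 tt0 t01; have t0p : 0 < t0 - 1 by rewrite subr_gt0.
have t_ge0 : 0 <= t by apply: le_trans t1.
rewrite subrX1 mulrAC -mulrA ler_wpM2l ?subr_ge0 // ler_pdivlMr //.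
apply: le_trans (_ : _ <= \sum_(i < k) t0 ^+ i * (t0 - 1)) _.
  rewrite -!mulr_suml ler_wpM2r ?(ltW t0p) //; apply: ler_sum => i _.
  by apply: lerXn2r; rewrite // nnegrE (le_trans t_ge0).
by rewrite -mulr_suml mulrC -subrX1 gerBl.
Qed.

Lemma bernoulli_ineq (h : F) n : 0 <= h -> 1 + h *+ n <= (1 + h) ^+ n.
Proof.
move=> h0; elim: n => [|n IH]; first by rewrite mulr0n addr0 expr0.
rewrite exprSr (le_trans _ (ler_wpM2r _ IH)) ?addr_ge0 //.
have -> : (1 + h *+ n) * (1 + h) = 1 + h *+ n.+1 + h *+ n * h.
  by rewrite mulrSr; ring.
by rewrite lerDl mulr_ge0 // mulrn_wge0.
Qed.

End NumField.

Section PowerSeries.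
Variable R : realType.
Local Notation C := R[i].
Implicit Types (u v a d : nat -> C).

Lemma archi_C (x y : C) : x \is Num.real -> 0 < y -> exists n : nat, x < y *+ n.
Proof.
move=> xr y0; have xyr : x / y \is Num.real by rewrite realM // realV gtr0_real.
set a := complex.Re (x / y).
have ha : `|a| < (Num.Def.archi_bound `|a|)%:R := archi_boundP (normr_ge0 a).
exists (Num.Def.archi_bound `|a|).
rewrite -mulr_natl -ltr_pdivrMr // -(RRe_real xyr) -/a.
have -> : (Num.Def.archi_bound `|a|)%:R = ((Num.Def.archi_bound `|a|)%:R : R)%:C%C.
  by rewrite rmorph_nat.
by rewrite ltcR; apply: le_lt_trans (ler_norm a) ha.
Qed.

Lemma exprn_small (q e : C) : 0 <= q -> q < 1 -> 0 < e ->
  exists N, forall n, (N <= n)%N -> q ^+ n < e.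
Proof.
move=> q0 q1 e0.
suff [N qN] : exists N, q ^+ N < e.
  by exists N => n Nn; apply: le_lt_trans qN; apply: ler_wiXn2l (ltW q1) _ _ Nn.
have [->|q_neq0] := eqVneq q 0; first by exists 1%N; rewrite expr1.
have q_gt0 : 0 < q by rewrite lt_def q_neq0.
pose h := q^-1 - 1.
have h_gt0 : 0 < h by rewrite subr_gt0 invf_gt1.
have [n en] := archi_C (real1 C) (mulr_gt0 e0 h_gt0).
exists n; have qhn : q ^+ n * (1 + h) ^+ n = 1.
  by rewrite -exprMn /h addrC subrK mulfV // expr1n.
have hn_gt0 : 0 < h *+ n.
  rewrite mulrn_wgt0 // lt0n; apply: contraTneq en => ->.
  by rewrite mulr0n ltr10.
rewrite -(ltr_pM2r hn_gt0); apply: le_lt_trans (_ : _ <= 1) _; last by rewrite mulrnAr.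
rewrite -qhn ler_wpM2l ?exprn_ge0 // (le_trans _ (bernoulli_ineq n (ltW h_gt0))) //.
by rewrite lerDr.
Qed.

Lemma has_sum_ext u v l : u =1 v -> has_sum u l -> has_sum v l.
Proof.
move=> uv ul e e0; have [N HN] := ul e e0; exists N => n Nn.
by rewrite -(eq_bigr _ (fun (k : 'I_n) _ => uv k)); apply: HN.
Qed.

Lemma has_sum_unique u l1 l2 : has_sum u l1 -> has_sum u l2 -> l1 = l2.
Proof.
move=> ul1 ul2; apply/eqP; apply: contraT => l12.
have e0 : 0 < `|l1 - l2| / 2 by rewrite divr_gt0 // normr_gt0 subr_eq0.
have [N1 HN1] := ul1 _ e0; have [N2 HN2] := ul2 _ e0.
set S := \sum_(k < maxn N1 N2) u k.
have S1 := HN1 (maxn N1 N2) (leq_maxl _ _).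
have S2 := HN2 (maxn N1 N2) (leq_maxr _ _).
have : `|l1 - l2| < `|l1 - l2| / 2 + `|l1 - l2| / 2.
  by apply: le_lt_trans (ler_distD S _ _) _; rewrite distrC ltrD.
by rewrite -splitr ltxx.
Qed.

Lemma has_sumD u v lu lv : has_sum u lu -> has_sum v lv ->
  has_sum (fun k => u k + v k) (lu + lv).
Proof.
move=> ua vb e e0; have e2 : 0 < e / 2 by rewrite divr_gt0.
have [N1 HN1] := ua _ e2; have [N2 HN2] := vb _ e2.
exists (maxn N1 N2) => n; rewrite geq_max => /andP[n1 n2].
rewrite big_split /= (splitr e) opprD addrACA.
by apply: le_lt_trans (ler_normD _ _) _; rewrite ltrD ?HN1 ?HN2.
Qed.

Lemma has_sumZ u l c : has_sum u l -> has_sum (fun k => c * u k) (c * l).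
Proof.
move=> ua e e0; have [->|c0] := eqVneq c 0.
  by exists 0%N => n _; rewrite big1 => [|k _]; rewrite !mul0r ?subrr ?normr0.
have c_gt0 : 0 < `|c| by rewrite normr_gt0.
have [N HN] := ua (e / `|c|) (divr_gt0 e0 c_gt0).
exists N => n Nn; rewrite -mulr_sumr -mulrBr normrM mulrC -ltr_pdivlMr //.
exact: HN.
Qed.

Lemma has_sumB u v lu lv : has_sum u lu -> has_sum v lv ->
  has_sum (fun k => u k - v k) (lu - lv).
Proof.
move=> ua vb; rewrite -mulN1r; apply: has_sum_ext (has_sumD ua (has_sumZ (-1) vb)).
by move=> k; rewrite mulN1r.
Qed.

Lemma has_sum_sum (N : nat) (w : nat -> nat -> C) (a : nat -> C) :
  (forall j, (j < N)%N -> has_sum (w j) (a j)) ->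
  has_sum (fun k => \sum_(j < N) w j k) (\sum_(j < N) a j).
Proof.
elim: N => [|N IH] wa.
  move=> e e0; exists 0%N => n _.
  by rewrite big_ord0 big1 => [|k _]; rewrite ?big_ord0 ?subrr ?normr0.
rewrite big_ord_recr /=.
apply: has_sum_ext (has_sumD (IH (fun j jN => wa j (ltnW jN))) (wa N (ltnSn N))).
by move=> k; rewrite big_ord_recr.
Qed.

Lemma has_sum_dirac (k : nat) (c : C) : has_sum (fun l => if l == k then c else 0) c.
Proof.
move=> e e0; exists k.+1 => n kn.
rewrite (bigD1 (Ordinal kn)) //= eqxx big1 ?addr0 ?subrr ?normr0 // => l lk.
by rewrite ifN //; apply: contra lk => /eqP lk; apply/eqP/val_inj.
Qed.

Lemma has_sum_norm_le u l M : has_sum u l ->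
  (forall n, `|\sum_(k < n) u k| <= M) -> `|l| <= M.
Proof.
move=> ul uM; apply/ler_addgt0Pr => e e0.
have [N HN] := ul e e0.
have -> : l = \sum_(k < N) u k - (\sum_(k < N) u k - l) by rewrite opprB addrC subrK.
by apply: le_trans (ler_normB _ _) _; rewrite lerD ?uM ?ltW ?HN.
Qed.

Lemma has_sum_bounded u l : has_sum u l -> exists B, 0 < B /\ forall k, `|u k| <= B.
Proof.
move=> ul; have [N HN] := ul 1 ltr01.
exists (2 + \sum_(j < N) `|u j|); split; first by rewrite ltr_wpDr ?sumr_ge0.
move=> k; have [kN|Nk] := ltnP k N.
  rewrite (bigD1 (Ordinal kN)) //= addrCA ler_wpDr //.
  by rewrite addr_ge0 ?sumr_ge0.
have -> : u k = (\sum_(j < k.+1) u j - l) - (\sum_(j < k) u j - l).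
  by rewrite big_ord_recr /=; ring.
apply: le_trans (ler_normB _ _) _; rewrite -[leLHS]addr0 lerD ?sumr_ge0 //.
by rewrite -[2]/(1 + 1) lerD ?ltW ?HN // leqW.
Qed.


Lemma pser_coef_bound a (w : C) : converges (pser a w) ->
  exists B, 0 < B /\ forall k, `|a k| * `|w| ^+ k <= B.
Proof.
move=> [l /has_sum_bounded[B [B0 aB]]]; exists B; split => // k.
by rewrite -normrX -normrM; apply: aB.
Qed.

Lemma has_sum_pserB a d (z la ld : C) : has_sum (pser a z) la -> has_sum (pser d z) ld ->
  has_sum (pser (fun k => a k - d k) z) (la - ld).
Proof. by move=> ha hd; apply: has_sum_ext (has_sumB ha hd) => k; rewrite /pser mulrBl. Qed.

Lemma coef_geometric_decay d (r : C) : inA d -> 0 <= r -> r < 1 ->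
  exists B q, [/\ 0 < B, 0 <= q, q < 1 & forall k, `|d k| * r ^+ k <= B * q ^+ k].
Proof.
move=> dA r0 r1; have [rr' r'1] := midf_lt r1; set r' := (r + 1) / 2 in rr' r'1.
have r'_gt0 : 0 < r' by apply: le_lt_trans rr'.
have [B [B0 dB]] : exists B, 0 < B /\ forall k, `|d k| * `|r'| ^+ k <= B.
  by apply/pser_coef_bound/dA; rewrite gtr0_norm.
rewrite (gtr0_norm r'_gt0) in dB.
have q0 : 0 <= r / r' by rewrite divr_ge0 // ltW.
exists B, (r / r'); split=> // [|k]; first by rewrite ltr_pdivrMr ?mul1r.
have -> : r ^+ k = r' ^+ k * (r / r') ^+ k by rewrite -exprMn mulrC divfK // gt_eqF.
by rewrite mulrA ler_wpM2r ?exprn_ge0.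
Qed.

Lemma has_sum_root_filter a v (w : C) N m : N.-primitive_root w ->
  (forall j, (j < N)%N -> has_sum (fun l => a l * (w ^+ j) ^+ l) (v j)) ->
  has_sum (fun l => if (N %| l + m)%N then a l else 0)
    (N%:R^-1 * \sum_(j < N) (w ^+ m) ^+ j * v j).
Proof.
move=> pw av; have N_gt0 := prim_order_gt0 pw.
rewrite mulr_sumr (eq_bigr (fun j : 'I_N => N%:R^-1 * (w ^+ m) ^+ j * v j)) => [|j _];
  last by rewrite mulrA.
apply: has_sum_ext (has_sum_sum (fun j jN => has_sumZ (N%:R^-1 * (w ^+ m) ^+ j) (av j jN))).
move=> l /=; rewrite (eq_bigr (fun j : 'I_N => a l * N%:R^-1 * (w ^+ (l + m)) ^+ j)).
  rewrite -mulr_sumr sum_prim_root_expr //; case: ifP => _; last by rewrite mulr0.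
  by rewrite mulfVK // pnatr_eq0 -lt0n.
by move=> j _; rewrite -!exprM mulnDl exprD [(j * l)%N]mulnC; ring.
Qed.

Lemma coef_le_sup d (r M : C) k : inA d -> 0 <= r -> r < 1 ->
  (forall z, `|z| <= r -> forall l, has_sum (pser d z) l -> `|l| <= M) ->
  `|d k| * r ^+ k <= M.
Proof.
move=> dA r0 r1 dM; apply/ler_addgt0Pr => e e0.
have [B [q [B0 q0 q1 dB]]] := coef_geometric_decay dA r0 r1.
have q1_gt0 : 0 < 1 - q by rewrite subr_gt0.
have [N0 qN0] := exprn_small q0 q1 (divr_gt0 (mulr_gt0 e0 q1_gt0) B0).
pose N := (N0 + k).+1; have N_gt0 : (0 < N)%N by [].
have [w pw] : exists w : C, N.-primitive_root w.
  by apply: prim_root_exists; rewrite ?pnatr_eq0.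
have w1 := norm_prim_root N_gt0 pw.
have rw1 j : `|r * w ^+ j| = r by rewrite normrM normrX w1 expr1n mulr1 ger0_norm.
have /choice[v dv] : forall j, exists l, has_sum (pser d (r * w ^+ j)) l.
  by move=> j; apply: dA; rewrite rw1.
have dv' j : (j < N)%N -> has_sum (fun l => d l * r ^+ l * (w ^+ j) ^+ l) (v j).
  by move=> _; apply: has_sum_ext (dv j) => l; rewrite /pser exprMn mulrA.
(* Averaging against the N-th roots of unity keeps the indices congruent to k
   mod N; apart from k itself they are at least N, a small geometric tail. *)
have := has_sum_root_filter (N - k) pw dv'.
set A := (N%:R^-1 * _) => filterA.
have AM : `|A| <= M.
  by apply: norm_root_average_le pw _ => j _; apply: dM (dv j); rewrite rw1.
have kN : (k < N)%N by rewrite ltnS leq_addl.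
pose u l := (if (N %| l + (N - k))%N then d l * r ^+ l else 0) -
  (if l == k then d k * r ^+ k else 0).
have tailA : `|A - d k * r ^+ k| <= e.
  apply: has_sum_norm_le (has_sumB filterA (has_sum_dirac k (d k * r ^+ k))) _ => n.
  apply: le_trans (norm_sum_geo_tail_le (u := u) (A := B) (N := N) n q0 q1 _ _) _.
  - move=> l; rewrite /u; case: (eqVneq l k) => [->|lk].
      by rewrite subnKC ?dvdnn ?(ltnW kN) // subrr normr0 mulr_ge0 ?exprn_ge0 ?(ltW B0).
    rewrite subr0; case: ifP => _; last by rewrite normr0 mulr_ge0 ?exprn_ge0 ?(ltW B0).
    by rewrite normrM normrX (ger0_norm r0) dB.
  - move=> l lN; rewrite /u dvdn_addn_subn //.
    by case: (eqVneq l k) => [->|]; rewrite subrr.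
  - rewrite ler_pdivrMr // mulrC -ler_pdivlMr //.
    by apply/ltW/qN0; apply/leqW/leq_addr.
rewrite -(ger0_norm r0) -normrX -normrM.
have -> : d k * r ^+ k = A - (A - d k * r ^+ k) by rewrite opprB addrC subrK.
by apply: le_trans (ler_normB _ _) _; apply: lerD.
Qed.

End PowerSeries.

Section DilationOperator.
Variable R : realType.
Local Notation C := R[i].
Implicit Types (a f g : nat -> C) (V : set (nat -> C)).

Lemma pser_Pop a (x z : C) k : pser (Pop x a) z k = pser a (x * z) k.
Proof. by rewrite /pser /Pop exprMn mulrA. Qed.

Lemma pser_hadamard_Pop f g (x : C) k :
  pser (hadamard f (Pop x g)) 1 k = pser (hadamard f g) x k.
Proof. by rewrite /pser /hadamard /Pop expr1n mulr1 mulrA. Qed.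

Lemma Pop0 a (x : C) : Pop x a 0 = a 0.
Proof. by rewrite /Pop expr0 mulr1. Qed.

Lemma inAbar_inA a : inAbar a -> inA a.
Proof. by move=> [rho [rho1 arho]] z z1; apply: arho; apply: lt_trans rho1. Qed.

Lemma inAbar_Pop a (rho x : C) :
  (forall z, `|z| < rho -> converges (pser a z)) -> `|x| < rho -> inAbar (Pop x a).
Proof.
move=> arho xrho; have rho_gt0 : 0 < rho by apply: le_lt_trans xrho.
have Pop_conv z : `|x * z| < rho -> converges (pser (Pop x a) z).
  by move=> /arho[l al]; exists l; apply: has_sum_ext al => k; rewrite pser_Pop.
have [x0|x_neq0] := eqVneq x 0.
  by exists 2; split=> [|z _]; rewrite ?ltr1n //; apply: Pop_conv; rewrite x0 mul0r normr0.
have x_gt0 : 0 < `|x| by rewrite normr_gt0.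
exists (rho / `|x|); split=> [|z zx]; first by rewrite ltr_pdivlMr // mul1r.
by apply: Pop_conv; rewrite normrM mulrC -ltr_pdivlMr.
Qed.

Lemma dualT_sub_dual V : complete (dualT V) -> dualT V `<=` dual V.
Proof.
move=> VTc g VTg; have [[/inAbar_inA gA g0] _] := VTg; split=> // f Vf z z1 l fgl.
have [_ Pzg] := VTc g VTg z (ltW z1).
by apply: (Pzg f Vf l); apply: has_sum_ext fgl => k; rewrite pser_hadamard_Pop.
Qed.

Lemma Pop_dual_dualT V g (z : C) : dual V g -> `|z| < 1 -> dualT V (Pop z g).
Proof.
move=> [[gA g0] Vg] z1; split; first by split; [apply: inAbar_Pop gA z1 | rewrite Pop0].
move=> f Vf l fgl; apply: (Vg f Vf z z1 l).
by apply: has_sum_ext fgl => k; rewrite pser_hadamard_Pop.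
Qed.

End DilationOperator.

Section LocallyUniformTopology.
Variable R : realType.
Local Notation C := R[i].
Implicit Types (f g h : nat -> C) (U : set (nat -> C)).

Definition nearA (r eps : C) f g : Prop :=
  forall z : C, `|z| <= r -> forall lf lg : C,
    has_sum (pser f z) lf -> has_sum (pser g z) lg -> `|lg - lf| < eps.

Definition interiorA U : set (nat -> C) :=
  [set f | inA f /\ exists r eps : C, [/\ 0 <= r, r < 1, 0 < eps &
     forall g, inA g -> nearA r eps f g -> U g]].

Lemma interiorA_sub U : interiorA U `<=` U.
Proof.
move=> f [fA [r [eps [_ _ eps0 fU]]]]; apply: fU => // z _ lf lg fl gl.
by rewrite (has_sum_unique gl fl) subrr normr0.
Qed.

Lemma not_interiorA U f (r eps : C) : inA f -> 0 <= r -> r < 1 -> 0 < eps ->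
  ~ interiorA U f -> exists g, [/\ inA g, nearA r eps f g & ~ U g].
Proof.
move=> fA r0 r1 eps0 fU; apply: contrapT => none; apply: fU; split=> //.
exists r, eps; split=> // g gA fg; apply: contrapT => gU.
by apply: none; exists g.
Qed.

Lemma nearA_trans (r e1 e2 : C) f g h : r < 1 -> inA g ->
  nearA r e1 f g -> nearA r e2 g h -> nearA r (e1 + e2) f h.
Proof.
move=> r1 gA fg gh z zr lf lh fl hl; have [lg gl] := gA z (le_lt_trans zr r1).
apply: le_lt_trans (ler_distD lg _ _) _; rewrite addrC.
by apply: ltrD; [apply: fg zr _ _ fl gl | apply: gh zr _ _ gl hl].
Qed.

Lemma openA_interiorA U : openA (interiorA U).
Proof.
move=> f fA [_ [r [eps [r0 r1 eps0 fU]]]].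
have eps2 : 0 < eps / 2 by rewrite divr_gt0.
exists r, (eps / 2); split=> // g gA fg; split=> //.
exists r, (eps / 2); split=> // h hA gh; apply: fU => //.
by rewrite (splitr eps); apply: nearA_trans gh.
Qed.

Lemma coef_sub_le_near f g (r eps : C) k : inA f -> inA g -> 0 <= r -> r < 1 ->
  nearA r eps f g -> `|f k - g k| * r ^+ k <= eps.
Proof.
move=> fA gA r0 r1 fg.
have dA : inA (fun k => f k - g k).
  move=> z z1; have [lf fl] := fA z z1; have [lg gl] := gA z z1.
  by exists (lf - lg); apply: has_sum_pserB.
apply: (coef_le_sup k dA r0 r1) => z zr l fgl.
have [lf fl] := fA z (le_lt_trans zr r1); have [lg gl] := gA z (le_lt_trans zr r1).
by rewrite (has_sum_unique fgl (has_sum_pserB fl gl)) distrC ltW // (fg z zr).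
Qed.

End LocallyUniformTopology.

Section Dilation.
Variable R : realType.
Local Notation C := R[i].
Variables (g : nat -> C) (r s t0 Bg : C).
Hypotheses (r_gt0 : 0 < r) (r_lt1 : r < 1) (t0_gt1 : 1 < t0) (t0_lt_rs : t0 < r * s)
  (Bg_gt0 : 0 < Bg) (gBg : forall k, `|g k| * s ^+ k <= Bg).

Let p := t0 / (r * s).

Let rs_gt0 : 0 < r * s. Proof. exact: lt_trans (lt_trans ltr01 t0_gt1) t0_lt_rs. Qed.
Let s_gt0 : 0 < s. Proof. by rewrite -(pmulr_rgt0 _ r_gt0). Qed.
Let p_ge0 : 0 <= p. Proof. by rewrite divr_ge0 // ltW // (lt_trans ltr01). Qed.
Let p_lt1 : p < 1. Proof. by rewrite ltr_pdivrMr // mul1r. Qed.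

Let t0_expr k : t0 ^+ k = r ^+ k * s ^+ k * p ^+ k.
Proof. by rewrite -!exprMn /p mulrC divfK // gt_eqF. Qed.

Lemma coef_hadamard_le (a : nat -> C) A k : `|a k| * r ^+ k <= A ->
  `|a k| * `|g k| * t0 ^+ k <= A * Bg * p ^+ k.
Proof.
move=> aA; rewrite t0_expr.
have -> : `|a k| * `|g k| * (r ^+ k * s ^+ k * p ^+ k) =
  `|a k| * r ^+ k * (`|g k| * s ^+ k) * p ^+ k by ring.
by rewrite ler_wpM2r ?exprn_ge0 // ler_pM ?mulr_ge0 ?exprn_ge0 ?(ltW r_gt0) ?(ltW s_gt0).
Qed.

Lemma norm_sum_hadamard_sub_dilate f f' Bf eps t n :
  (forall k, `|f k| * r ^+ k <= Bf) -> (forall k, `|f k - f' k| * r ^+ k <= eps) ->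
  1 <= t -> t <= t0 ->
  `|\sum_(k < n) pser (hadamard f g) 1 k - \sum_(k < n) pser (hadamard f' (Pop t g)) 1 k|
    <= ((t - 1) / (t0 - 1) * Bf + eps) * Bg / (1 - p).
Proof.
move=> fBf ff' t1 tt0; rewrite -sumrB.
pose u k := pser (hadamard f g) 1 k - pser (hadamard f' (Pop t g)) 1 k.
apply: (norm_sum_geo_le (u := u)) => // k.
rewrite /u /pser /hadamard /Pop expr1n !mulr1.
have -> : f k * g k - f' k * (g k * t ^+ k) =
  f k * g k * (1 - t ^+ k) + (f k - f' k) * g k * t ^+ k by ring.
have delta_ge0 : 0 <= (t - 1) / (t0 - 1) by rewrite divr_ge0 ?subr_ge0 // ltW.
rewrite [in leRHS]mulrDl [in leRHS]mulrDl.
apply: le_trans (ler_normD _ _) _; apply: lerD; rewrite !normrM.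
- rewrite distrC (@ger0_norm _ (t ^+ k - 1)) ?subr_ge0 ?exprn_ege1 //.
  apply: le_trans (ler_wpM2l _ (exprn_sub1_le k t1 tt0 t0_gt1)) _; first by rewrite mulr_ge0.
  rewrite mulrCA -2![X in _ <= X]mulrA ler_wpM2l // mulrA.
  exact: coef_hadamard_le.
- rewrite (@ger0_norm _ (t ^+ k)) ?exprn_ge0 ?(le_trans ler01) //.
  apply: le_trans (coef_hadamard_le (a := fun k => f k - f' k) (ff' k)).
  by rewrite ler_wpM2l ?mulr_ge0 // lerXn2r // nnegrE (le_trans ler01) // (le_trans t1).
Qed.

Definition nonvanishing_dilations (n : nat) (f : nat -> C) : Prop :=
  forall t, 1 < t -> (t - 1) *+ n.+1 <= t0 - 1 ->
    forall l, has_sum (pser (hadamard f (Pop t g)) 1) l -> l <> 0.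

Lemma le_dilation_bound t n : 1 < t -> (t - 1) *+ n.+1 <= t0 - 1 -> t <= t0.
Proof.
move=> t1 tn; rewrite -(lerD2r (-1)); apply: le_trans tn; rewrite -[leLHS]mulr1n.
by apply: ler_wpMn2l; rewrite ?subr_ge0 ?ltW.
Qed.

Lemma nonvanishing_dilations_mono n n' f : (n <= n')%N ->
  nonvanishing_dilations n f -> nonvanishing_dilations n' f.
Proof.
move=> nn' fn t t1 tn'; apply: (fn t t1); apply: le_trans tn'.
by apply: ler_wpMn2l; rewrite ?subr_ge0 ?ltW.
Qed.

Lemma interiorA_nonvanishing_dilations f : inA f ->
  (forall l, has_sum (pser (hadamard f g) 1) l -> l <> 0) ->
  exists n, interiorA (nonvanishing_dilations n) f.
Proof.
move=> fA fg_neq0; apply: contrapT => /forallNP not_interior.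
apply: (fg_neq0 0) => // e e0.
have [Bf [Bf0 fBf]] : exists Bf, 0 < Bf /\ forall k, `|f k| * r ^+ k <= Bf.
  by rewrite -[r](gtr0_norm r_gt0); apply/pser_coef_bound/fA; rewrite gtr0_norm.
have e3 : 0 < e / 3 by rewrite divr_gt0.
have p1 : 0 < 1 - p by rewrite subr_gt0.
have K_gt0 : 0 < Bf * Bg / (1 - p) by apply: divr_gt0 => //; apply: mulr_gt0.
have [n Kn] := archi_C (gtr0_real K_gt0) e3.
pose eps := e / 3 * (1 - p) / Bg.
have eps_gt0 : 0 < eps by apply: divr_gt0 => //; apply: mulr_gt0.
have [f' [f'A ff' f'_vanishes]] :=
  not_interiorA fA (ltW r_gt0) r_lt1 eps_gt0 (not_interior n).
have [t [t1 tn f't0]] : exists t, [/\ 1 < t, (t - 1) *+ n.+1 <= t0 - 1 &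
    has_sum (pser (hadamard f' (Pop t g)) 1) 0].
  apply: contrapT => none; apply: f'_vanishes => t t1 tn l f'tl l0.
  by apply: none; exists t; rewrite -l0.
have tt0 := le_dilation_bound t1 tn.
have ff'_coef k := coef_sub_le_near k fA f'A (ltW r_gt0) r_lt1 ff'.
have delta_le : (t - 1) / (t0 - 1) <= n.+1%:R^-1.
  by rewrite ler_pdivrMr ?subr_gt0 // mulrC ler_pdivlMr ?ltr0n // mulr_natr.
have bound : ((t - 1) / (t0 - 1) * Bf + eps) * Bg / (1 - p) <= e / 3 + e / 3.
  rewrite mulrDl mulrDl; apply: lerD.
    have -> : (t - 1) / (t0 - 1) * Bf * Bg / (1 - p) =
      (t - 1) / (t0 - 1) * (Bf * Bg / (1 - p)) by rewrite !mulrA.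
    apply: le_trans (ler_wpM2r (ltW K_gt0) delta_le) _.
    rewrite mulrC ler_pdivrMr ?ltr0n // mulr_natr; apply/ltW/(lt_le_trans Kn).
    by apply: ler_wpMn2l => //; apply: ltW.
  suff -> : eps * Bg / (1 - p) = e / 3 by [].
  by rewrite /eps; field; rewrite !gt_eqF.
have [N HN] := f't0 _ e3.
exists N => m Nm; rewrite subr0.
have := norm_sum_hadamard_sub_dilate m fBf ff'_coef (ltW t1) tt0.
have := HN m Nm; rewrite subr0.
set Sd := \sum_(k < m) _; set S := \sum_(k < m) _ => Sd_small SSd.
have -> : e = e / 3 + e / 3 + e / 3 by field.
rewrite -(subrK Sd S); apply: le_lt_trans (ler_normD _ _) _.
by apply: ler_ltD => //; apply: le_trans bound.
Qed.

End Dilation.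

Section Main.
Variable R : realType.
Local Notation C := R[i].

Lemma dilation_radii (rho : C) : 1 < rho -> exists r s t0 : C,
  [/\ 0 < r < 1, 1 < t0, t0 < r * s, 0 < s & s < rho].
Proof.
move=> rho1; have [s1 srho] := midf_lt rho1; set s := (1 + rho) / 2 in s1 srho.
have s_gt0 : 0 < s := lt_trans ltr01 s1.
have /midf_lt[sr r1] : s^-1 < 1 by rewrite invf_lt1.
set r := (s^-1 + 1) / 2 in sr r1.
have rs1 : 1 < r * s by rewrite -ltr_pdivrMr // div1r.
have [t01 t0rs] := midf_lt rs1.
exists r, s, ((1 + r * s) / 2); split=> //.
by rewrite r1 andbT (lt_trans _ sr) ?invr_gt0.
Qed.

Lemma dualT_dilate (V : set (nat -> C)) g : V `<=` inA (R:=R) -> compactA V ->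
  dualT V g -> exists t : C, 1 < t /\ dualT V (Pop t g).
Proof.
move=> VA [_ Vcover] [[[rho [rho1 grho]] g0] Vg].
have [r [s [t0 [/andP[r0 r1] t01 t0rs s0 srho]]]] := dilation_radii rho1.
have t0rho : t0 < rho.
  by apply: lt_le_trans t0rs (le_trans (ler_piMl (ltW s0) (ltW r1)) (ltW srho)).
have [Bg [Bg0 gBg]] : exists Bg, 0 < Bg /\ forall k, `|g k| * s ^+ k <= Bg.
  by rewrite -[s](gtr0_norm s0); apply/pser_coef_bound/grho; rewrite gtr0_norm.
have [N [idx Vidx]] := Vcover nat (fun n => interiorA (nonvanishing_dilations g t0 n))
  (fun n => @openA_interiorA _ _)
  (fun f Vf => interiorA_nonvanishing_dilations r0 r1 t01 t0rs Bg0 gBg (VA f Vf) (Vg f Vf)).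
pose m := (\max_(j < N) idx j)%N.
pose t := 1 + (t0 - 1) / m.+1%:R.
have t1 : 1 < t by rewrite ltrDl divr_gt0 ?subr_gt0 ?ltr0n.
have tm : (t - 1) *+ m.+1 <= t0 - 1 by rewrite addrC addKr -mulr_natr divfK ?pnatr_eq0.
exists t; split=> //; split.
  split; last by rewrite Pop0.
  apply: inAbar_Pop grho _; rewrite gtr0_norm ?(lt_trans ltr01) //.
  exact: le_lt_trans (le_dilation_bound t1 tm) t0rho.
move=> f Vf; have [j fOj] := Vidx f Vf.
exact: nonvanishing_dilations_mono (leq_bigmax j) (interiorA_sub fOj) t t1 tm.
Qed.

End Main.

Theorem theorem3 (R : realType) (V : set (nat -> R[i])) :
  V `<=` inA0 (R:=R) -> compactA V -> complete (dualT V) ->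
  dual (dual V) = perp (dualT V).
Proof.
move=> VA0 Vcompact VTcomplete; apply/seteqP; split=> h [hA Vh]; split=> //.
- move=> g VTg l ghl.
  have VA : V `<=` inA (R:=R) by move=> f /VA0[].
  have [t [t1 VTtg]] := dualT_dilate VA Vcompact VTg.
  have t_gt0 : 0 < t := lt_trans ltr01 t1.
  apply: (Vh _ (dualT_sub_dual VTcomplete VTtg) t^-1 _ l).
    by rewrite normfV gtr0_norm // invf_lt1.
  apply: has_sum_ext ghl => k; rewrite /pser /hadamard /Pop expr1n mulr1 exprVn.
  by field; rewrite expf_neq0 // gt_eqF.
- move=> g Vg z z1 l hgl; apply: (Vh _ (Pop_dual_dualT Vg z1) l).
  by apply: has_sum_ext hgl => k; rewrite /pser /hadamard /Pop expr1n mulr1 mulrAC.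
Qed.
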